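(* Let $r,s$ be nonzero complex numbers with $r\neq \pm1$, put $\lambda=r-r^{-1}$, and fix logarithms $\ln r,\ln s$. Let $U$ be a (suitably completed) algebra containing elements $\tilde A,\tilde B,\tilde C,\tilde D,\tilde F$ satisfying $[\tilde A,\tilde B]=\tilde B$, $[\tilde A,\tilde C]=-\tilde C$, $[\tilde D,\tilde B]=-\tilde B$, $[\tilde D,\tilde C]=\tilde C$, $[\tilde A,\tilde D]=0$, and $\tilde F$ central, in which expressions $x^{X}:=\exp(X\ln x)$ ($x\in\{r,s\}$, $X$ a linear combination of $\tilde A,\tilde D,\tilde F,1$) make sense. Put $H_1=\tilde A+\tilde D$, $H_2=\tilde A-\tilde D$ and $J=s^{-\frac12(\tilde F-H_2-1)}r^{\frac12(\tilde F-H_1+1)}$, $M=s^{-\frac12(\tilde F-H_1+1)}r^{\frac12(-\tilde F+H_2+1)}$, $N=s^{-\frac12(\tilde F+H_1-1)}r^{\frac12(-\tilde F-H_2+1)}$, $J'=s^{-\frac12(\tilde F-H_2-1)}r^{-\frac12(\tilde F-H_1+1)}$, $M'=s^{-\frac12(\tilde F-H_1+1)}r^{-\frac12(-\tilde F+H_2+1)}$, $N'=s^{-\frac12(\tilde F+H_1-1)}r^{-\frac12(-\tilde F-H_2+1)}$, $P=\lambda\tilde C$, $Q=-\lambda\tilde B$. Then $J,M,N,J',M',N'$ pairwise commute and $PJ=sJP$, $PJ'=sJ'P$, $JQ=sQJ$, $J'Q=sQJ'$, $PM=rMP$, $NP=rPN$, $QM'=rM'Q$, $N'Q=rQN'$.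 Furthermore, the relation $QP-PQ=-\lambda(N'M-NM')$ holds if and only if $$[\tilde B,\tilde C]=\frac{s^{-\tilde F}\left(r^{\tilde A-\tilde D}-r^{-(\tilde A-\tilde D)}\right)}{r-r^{-1}}.$$
   Context: These elements are the nonzero entries of the matrices $\mathcal{L}^{+}=\begin{pmatrix}J&0&0\\0&M&P\\0&0&N\end{pmatrix}$, $\mathcal{L}^{-}=\begin{pmatrix}J'&0&0\\0&M'&0\\0&Q&N'\end{pmatrix}$ (up to scalar factors), which generate the algebra dual to the biparametric deformation $\mathcal{A}_{r,s}$ of $GL(2)\otimes GL(1)$; the listed relations are the component form of the $R\mathcal{L}\mathcal{L}$ relations. *)

From HB Require Import structures.
From mathcomp Require Import all_boot all_order all_algebra.
From mathcomp Require Import reals.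
From mathcomp.analysis Require Import sequences exp trigo.
From mathcomp.real_closed Require Import complex.
Set Implicit Arguments. Unset Strict Implicit. Unset Printing Implicit Defensive.
Import Order.TTheory GRing.Theory Num.Theory.
Local Open Scope ring_scope.

Definition cexp (R : realType) (z : R[i]) : R[i] :=
  ((expR (complex.Re z))%:C * (cos (complex.Im z) +i* sin (complex.Im z)))%C.

Definition comm (K : comNzRingType) (U : algType K) (X Y : U) : U := X * Y - Y * X.

Definition inW (K : comNzRingType) (U : algType K) (A D F X : U) : Prop :=
  exists a d f c : K, X = a *: A + d *: D + f *: F + c%:A.

(* "Expressions x^X := exp(X ln x) make sense" for X in span(A, D, F, 1):
   E : U -> U is an exponential map on that (commutative) subspace, i.e. it
   satisfies the identities the exponential series satisfies in any
   completion where it converges: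
   - E (X + Y) = E X * E Y  for X, Y in the span (they commute);
   - E (c 1) = exp(c) 1  for scalars c;
   - if [X, Y] = a Y then E X * Y = Y * E (X + a 1). *)
Definition exp_map (R : realType) (U : algType R[i]) (A D F : U) (E : U -> U) : Prop :=
  [/\ (forall X Y, inW A D F X -> inW A D F Y -> E (X + Y) = E X * E Y),
      (forall c : R[i], E (c%:A) = (cexp c)%:A) &
      (forall (X Y : U) (a : R[i]), inW A D F X -> comm X Y = a *: Y ->
          E X * Y = Y * E (X + a%:A))].

(* x^X := exp(X ln x), given lx = ln x. *)
Definition pw (R : realType) (U : algType R[i]) (E : U -> U) (lx : R[i]) (X : U) : U :=
  E (lx *: X).

From HB Require Import structures.
From mathcomp Require Import all_boot all_order all_algebra.
From mathcomp Require Import reals.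
From mathcomp.analysis Require Import sequences exp trigo.
From mathcomp.real_closed Require Import complex.
From mathcomp Require Import ring.
Import Order.TTheory GRing.Theory Num.Theory.
Local Open Scope ring_scope.
Set Implicit Arguments. Unset Strict Implicit.

(* All six operators are exponentials of elements of the commutative span W of
   A, D, F, 1, so they commute.  An element Z of W acts on B and C by scalars
   (F is central, H1 = A + D kills B and C, and H2 = A - D has eigenvalues 2
   and -2), and [Z, Y] = a Y turns into the q-commutation e^Z Y = e^a Y e^Z;
   this gives the eight relations.  Finally N'M and NM' are s^-F r^H2 and
   s^-F r^-H2, while QP - PQ = -lam^2 [B, C], which gives the equivalence. *)

Lemma cexpD (R : realType) (a b : R[i]) : cexp (a + b) = cexp a * cexp b.
Proof.
case: a => x y; case: b => u v; rewrite /cexp /= expRD cosD sinD.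
by simpc; congr (_ +i* _)%C; ring.
Qed.

Lemma cexp0 (R : realType) : cexp (0 : R[i]) = 1.
Proof. by rewrite /cexp /= expR0 cos0 sin0 mul1r. Qed.

Lemma subrV_neq0 (K : fieldType) (r : K) :
  r != 0 -> r != 1 -> r != -1 -> r - r^-1 != 0.
Proof.
move=> r0 r1 rN1.
have : (r - 1) * (r + 1) != 0 by rewrite mulf_neq0 // ?subr_eq0 // addr_eq0.
have -> : (r - 1) * (r + 1) = r * (r - r^-1) by field.
by rewrite mulf_eq0 negb_or => /andP[].
Qed.

Section Commutator.
Variables (K : comNzRingType) (U : algType K).
Implicit Types (X Y Z : U) (a k l : K).

Lemma commDl X Y Z : comm (X + Y) Z = comm X Z + comm Y Z.
Proof. by rewrite /comm mulrDl mulrDr opprD addrACA. Qed.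

Lemma commNl X Z : comm (- X) Z = - comm X Z.
Proof. by rewrite /comm mulNr mulrN opprK opprB addrC. Qed.

Lemma commZl k X Z : comm (k *: X) Z = k *: comm X Z.
Proof. by rewrite /comm -scalerAl -scalerAr -scalerBr. Qed.

Lemma comm1l Z : comm 1 Z = 0.
Proof. by rewrite /comm mul1r mulr1 subrr. Qed.

Lemma commZZ k l X Y : comm (k *: X) (l *: Y) = (k * l) *: comm X Y.
Proof. by rewrite /comm -!scalerAl -!scalerAr !scalerA mulrC -scalerBr. Qed.

Lemma comm_eigenD X1 X2 Y a1 a2 : comm X1 Y = a1 *: Y -> comm X2 Y = a2 *: Y ->
  comm (X1 + X2) Y = (a1 + a2) *: Y.
Proof. by rewrite commDl scalerDl => -> ->. Qed.

Lemma comm_eigenN X Y a : comm X Y = a *: Y -> comm (- X) Y = (- a) *: Y.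
Proof. by rewrite commNl scaleNr => ->. Qed.

Lemma comm_eigen1 Y : comm 1 Y = 0 *: Y.
Proof. by rewrite comm1l scale0r. Qed.

End Commutator.

Definition qcomm (K : comNzRingType) (U : algType K) (q : K) (X Y : U) :=
  X * Y = q *: (Y * X).

Section QCommutation.
Variables (K : comNzRingType) (U : algType K).
Implicit Types (X Y : U) (k q : K).

Lemma qcommMl q1 q2 X1 X2 Y :
  qcomm q1 X1 Y -> qcomm q2 X2 Y -> qcomm (q1 * q2) (X1 * X2) Y.
Proof.
rewrite /qcomm => h1 h2.
by rewrite -mulrA h2 -scalerAr !mulrA h1 -scalerAl scalerA mulrC.
Qed.

Lemma qcommZl q k X Y : qcomm q X Y -> qcomm q (k *: X) Y.
Proof. by rewrite /qcomm -scalerAl -scalerAr => ->; rewrite !scalerA mulrC. Qed.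

Lemma qcommZr q k X Y : qcomm q X Y -> qcomm q X (k *: Y).
Proof. by rewrite /qcomm -scalerAl -scalerAr => ->; rewrite !scalerA mulrC. Qed.

Lemma qcomm_sym q q' X Y : q' * q = 1 -> qcomm q X Y -> qcomm q' Y X.
Proof. by rewrite /qcomm => qq' h; rewrite h scalerA qq' scale1r. Qed.

End QCommutation.

Lemma qcomm_cexp_sym (R : realType) (U : algType R[i]) b (X Y : U) :
  qcomm (cexp (- b)) X Y -> qcomm (cexp b) Y X.
Proof. by apply: qcomm_sym; rewrite -cexpD subrr cexp0. Qed.

Section Span.
Variables (K : comNzRingType) (U : algType K) (A D F : U).
Local Notation W := (inW A D F).

Lemma inWD X Y : W X -> W Y -> W (X + Y).
Proof.
case=> a [d [f [c ->]]] [a' [d' [f' [c' ->]]]].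
exists (a + a'), (d + d'), (f + f'), (c + c'); rewrite !scalerDl.
by rewrite addrACA; congr (_ + _); rewrite addrACA; congr (_ + _); exact: addrACA.
Qed.

Lemma inWZ k X : W X -> W (k *: X).
Proof.
case=> a [d [f [c ->]]]; exists (k * a), (k * d), (k * f), (k * c).
by rewrite !scalerDr !scalerA.
Qed.

Lemma inWN X : W X -> W (- X).
Proof. by rewrite -scaleN1r; apply: inWZ. Qed.

Lemma inW_A : W A.
Proof. by exists 1, 0, 0, 0; rewrite !scale0r !addr0 scale1r. Qed.

Lemma inW_D : W D.
Proof. by exists 0, 1, 0, 0; rewrite !scale0r !addr0 add0r scale1r. Qed.

Lemma inW_F : W F.
Proof. by exists 0, 0, 1, 0; rewrite !scale0r !addr0 !add0r scale1r. Qed.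

Lemma inW_scalar k : W k%:A.
Proof. by exists 0, 0, 0, k; rewrite !scale0r !add0r. Qed.

Lemma inW_1 : W 1.
Proof. by exists 0, 0, 0, 1; rewrite !scale0r !add0r scale1r. Qed.

End Span.

Ltac solve_inW := repeat first
  [ apply: inWD | apply: inWN | apply: inWZ
  | apply: inW_A | apply: inW_D | apply: inW_F | apply: inW_1 | apply: inW_scalar
  | assumption ].

Section ExponentialMap.
Variables (R : realType) (U : algType R[i]) (A D F : U) (E : U -> U).
Hypothesis expE : exp_map A D F E.
Local Notation W := (inW A D F).

Lemma expD X Y : W X -> W Y -> E (X + Y) = E X * E Y.
Proof. by case: expE => eD _ _; apply: eD. Qed.

Lemma exp_mulC X Y : W X -> W Y -> E X * E Y = E Y * E X.
Proof. by move=> wX wY; rewrite -!expD // addrC. Qed.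

Lemma qcomm_exp X Y a : W X -> comm X Y = a *: Y -> qcomm (cexp a) (E X) Y.
Proof.
case: expE => _ eC eshift wX hXY; rewrite /qcomm (eshift _ _ _ wX hXY).
by rewrite expD ?eC ?mulr_algr ?scalerAr //; apply: inW_scalar.
Qed.

Lemma qcomm_pw2 l1 l2 k1 k2 a1 a2 b X1 X2 Y :
  W X1 -> W X2 -> comm X1 Y = a1 *: Y -> comm X2 Y = a2 *: Y ->
  l1 * k1 * a1 + l2 * k2 * a2 = b ->
  qcomm (cexp b) (pw E l1 (k1 *: X1) * pw E l2 (k2 *: X2)) Y.
Proof.
move=> w1 w2 h1 h2 <-; rewrite cexpD.
apply: qcommMl; apply: qcomm_exp; solve_inW;
  by rewrite !commZl ?h1 ?h2 !scalerA.
Qed.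

Lemma pw_mulACA l1 l2 X1 X2 X3 X4 : W X1 -> W X2 -> W X3 -> W X4 ->
  pw E l1 X1 * pw E l2 X2 * (pw E l1 X3 * pw E l2 X4) =
  pw E l1 (X1 + X3) * pw E l2 (X2 + X4).
Proof.
move=> w1 w2 w3 w4; rewrite /pw !scalerDr !expD; solve_inW.
by rewrite mulrA -(mulrA (E _)) (@exp_mulC (l2 *: X2) (l1 *: X3)) ?mulrA //; solve_inW.
Qed.

End ExponentialMap.

Section HalfSums.
Variables (K : fieldType) (V : lmodType K) (x h e : V).
Hypothesis two_neq0 : (2 : K) != 0.

Let comb a b c := a *: x + b *: h + c *: e.

Let comb_x : x = comb 1 0 0.
Proof. by rewrite /comb !scale0r !addr0 scale1r. Qed.
Let comb_h : h = comb 0 1 0.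
Proof. by rewrite /comb !scale0r addr0 add0r scale1r. Qed.
Let comb_e : e = comb 0 0 1.
Proof. by rewrite /comb !scale0r !add0r scale1r. Qed.

Let combD a b c a' b' c' :
  comb a b c + comb a' b' c' = comb (a + a') (b + b') (c + c').
Proof.
by rewrite /comb !scalerDl addrACA; congr (_ + _); exact: addrACA.
Qed.

Let combZ k a b c : k *: comb a b c = comb (k * a) (k * b) (k * c).
Proof. by rewrite /comb !scalerDr !scalerA. Qed.

Let combN a b c : - comb a b c = comb (- a) (- b) (- c).
Proof. by rewrite -scaleN1r combZ !mulN1r. Qed.

Lemma half_sumN : - 2^-1 *: (x + h - e) + - 2^-1 *: (x - h + e) = - x.
Proof. by rewrite comb_x comb_h comb_e !(combN, combZ, combD); congr comb; field. Qed.

Lemma half_diff : - 2^-1 *: (- x - h + e) + 2^-1 *: (- x + h + e) = h.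
Proof. by rewrite comb_x comb_h comb_e !(combN, combZ, combD); congr comb; field. Qed.

Lemma half_diffN : 2^-1 *: (- x - h + e) + - 2^-1 *: (- x + h + e) = - h.
Proof. by rewrite comb_x comb_h comb_e !(combN, combZ, combD); congr comb; field. Qed.

End HalfSums.

Section Relations.
Variables (R : realType) (U : algType R[i]) (r s lr ls : R[i]) (A B C D F : U).
Variable E : U -> U.
Hypotheses (expE : exp_map A D F E) (elr : cexp lr = r) (els : cexp ls = s).
Hypotheses (hAB : comm A B = B) (hAC : comm A C = - C).
Hypotheses (hDB : comm D B = - B) (hDC : comm D C = C).
Hypothesis hF : forall Y, comm F Y = 0.

Local Notation W := (inW A D F).
Local Notation H1 := (A + D).
Local Notation H2 := (A - D).

Definition opJ := pw E ls (- 2^-1 *: (F - H2 - 1)) * pw E lr (2^-1 *: (F - H1 + 1)).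
Definition opM := pw E ls (- 2^-1 *: (F - H1 + 1)) * pw E lr (2^-1 *: (- F + H2 + 1)).
Definition opN := pw E ls (- 2^-1 *: (F + H1 - 1)) * pw E lr (2^-1 *: (- F - H2 + 1)).
Definition opJ' := pw E ls (- 2^-1 *: (F - H2 - 1)) * pw E lr (- 2^-1 *: (F - H1 + 1)).
Definition opM' := pw E ls (- 2^-1 *: (F - H1 + 1)) * pw E lr (- 2^-1 *: (- F + H2 + 1)).
Definition opN' := pw E ls (- 2^-1 *: (F + H1 - 1)) * pw E lr (- 2^-1 *: (- F - H2 + 1)).

Lemma ops_commute X Y : X \in [:: opJ; opM; opN; opJ'; opM'; opN'] ->
  Y \in [:: opJ; opM; opN; opJ'; opM'; opN'] -> X * Y = Y * X.
Proof.
have pw2E l1 l2 X1 X2 : W X1 -> W X2 ->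
    exists2 Z, W Z & pw E l1 X1 * pw E l2 X2 = E Z.
  move=> w1 w2; exists (l1 *: X1 + l2 *: X2); first by solve_inW.
  by rewrite /pw (expD expE) //; solve_inW.
have opE X' : X' \in [:: opJ; opM; opN; opJ'; opM'; opN'] -> exists2 Z, W Z & X' = E Z.
  by rewrite !inE => /orP[|/orP[|/orP[|/orP[|/orP[|]]]]] /eqP->; apply: pw2E; solve_inW.
by move=> /opE[Z1 w1 ->] /opE[Z2 w2 ->]; apply: (exp_mulC expE).
Qed.

Let eigen_AB : comm A B = 1 *: B. Proof. by rewrite hAB scale1r. Qed.
Let eigen_AC : comm A C = (-1) *: C. Proof. by rewrite hAC scaleN1r. Qed.
Let eigen_DB : comm D B = (-1) *: B. Proof. by rewrite hDB scaleN1r. Qed.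
Let eigen_DC : comm D C = 1 *: C. Proof. by rewrite hDC scale1r. Qed.
Let eigen_F Y : comm F Y = 0 *: Y. Proof. by rewrite hF scale0r. Qed.

Ltac solve_eigen := repeat first
  [ apply: comm_eigenD | apply: comm_eigenN | apply: comm_eigen1 | apply: eigen_F
  | apply: eigen_AB | apply: eigen_AC | apply: eigen_DB | apply: eigen_DC ].

Ltac solve_qcomm := apply: (qcomm_pw2 expE); solve_inW; solve_eigen; field; done.

Lemma qcomm_C_J : qcomm s C opJ.
Proof. by rewrite -els; apply: qcomm_cexp_sym; solve_qcomm. Qed.

Lemma qcomm_C_J' : qcomm s C opJ'.
Proof. by rewrite -els; apply: qcomm_cexp_sym; solve_qcomm. Qed.

Lemma qcomm_J_B : qcomm s opJ B.
Proof. by rewrite -els; solve_qcomm. Qed.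

Lemma qcomm_J'_B : qcomm s opJ' B.
Proof. by rewrite -els; solve_qcomm. Qed.

Lemma qcomm_C_M : qcomm r C opM.
Proof. by rewrite -elr; apply: qcomm_cexp_sym; solve_qcomm. Qed.

Lemma qcomm_N_C : qcomm r opN C.
Proof. by rewrite -elr; solve_qcomm. Qed.

Lemma qcomm_B_M' : qcomm r B opM'.
Proof. by rewrite -elr; apply: qcomm_cexp_sym; solve_qcomm. Qed.

Lemma qcomm_N'_B : qcomm r opN' B.
Proof. by rewrite -elr; solve_qcomm. Qed.

Lemma comm_BC_iff lam : lam != 0 ->
  comm (- lam *: B) (lam *: C) = - lam *: (opN' * opM - opN * opM') <->
  comm B C = lam^-1 *: (pw E ls (- F) * (pw E lr H2 - pw E lr (- H2))).
Proof.
move=> lam0; have lam2_neq0 : - lam * lam != 0 by rewrite mulf_neq0 ?oppr_eq0.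
have -> : opN' * opM - opN * opM' = pw E ls (- F) * (pw E lr H2 - pw E lr (- H2)).
  rewrite mulrBr !(pw_mulACA expE); solve_inW.
  have two_neq0 : (2 : R[i]) != 0 by rewrite pnatr_eq0.
  by rewrite !half_sumN ?half_diff ?half_diffN.
rewrite commZZ; split=> [h | ->]; last by rewrite scalerA; congr (_ *: _); field.
by apply: (scalerI lam2_neq0); rewrite h scalerA; congr (_ *: _); field.
Qed.

End Relations.

Theorem mainTheorem2 (R : realType) (U : algType R[i]) (r s lr ls : R[i])
    (A B C D F : U) (E : U -> U) :
  r != 0 -> s != 0 -> r != 1 -> r != -1 ->
  cexp lr = r -> cexp ls = s ->
  comm A B = B -> comm A C = - C -> comm D B = - B -> comm D C = C ->
  comm A D = 0 -> (forall Y : U, comm F Y = 0) ->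
  exp_map A D F E ->
  let lam := r - r^-1 in
  let H1 := A + D in
  let H2 := A - D in
  let J  := pw E ls (- 2^-1 *: (F - H2 - 1)) * pw E lr (2^-1 *: (F - H1 + 1)) in
  let M  := pw E ls (- 2^-1 *: (F - H1 + 1)) * pw E lr (2^-1 *: (- F + H2 + 1)) in
  let N  := pw E ls (- 2^-1 *: (F + H1 - 1)) * pw E lr (2^-1 *: (- F - H2 + 1)) in
  let J' := pw E ls (- 2^-1 *: (F - H2 - 1)) * pw E lr (- 2^-1 *: (F - H1 + 1)) in
  let M' := pw E ls (- 2^-1 *: (F - H1 + 1)) * pw E lr (- 2^-1 *: (- F + H2 + 1)) in
  let N' := pw E ls (- 2^-1 *: (F + H1 - 1)) * pw E lr (- 2^-1 *: (- F - H2 + 1)) in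
  let P := lam *: C in
  let Q := - lam *: B in
  [/\ (forall X Y : U, X \in [:: J; M; N; J'; M'; N'] ->
                       Y \in [:: J; M; N; J'; M'; N'] -> X * Y = Y * X),
      ([/\ P * J = s *: (J * P), P * J' = s *: (J' * P),
          J * Q = s *: (Q * J) & J' * Q = s *: (Q * J')]),
      ([/\ P * M = r *: (M * P), N * P = r *: (P * N),
          Q * M' = r *: (M' * Q) & N' * Q = r *: (Q * N')]) &
      ((Q * P - P * Q = - lam *: (N' * M - N * M') <->
       comm B C = lam^-1 *: (pw E ls (- F) * (pw E lr (A - D) - pw E lr (- (A - D))))))].
Proof.
move=> r0 _ r1 rN1 elr els hAB hAC hDB hDC _ hF expE lam H1 H2 J M N J' M' N' P Q.
split.
- exact: ops_commute.
- split; [apply: qcommZl | apply: qcommZl | apply: qcommZr | apply: qcommZr].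
  + exact: qcomm_C_J.
  + exact: qcomm_C_J'.
  + exact: qcomm_J_B.
  + exact: qcomm_J'_B.
- split; [apply: qcommZl | apply: qcommZr | apply: qcommZl | apply: qcommZr].
  + exact: qcomm_C_M.
  + exact: qcomm_N_C.
  + exact: qcomm_B_M'.
  + exact: qcomm_N'_B.
- exact: comm_BC_iff (subrV_neq0 r0 r1 rN1).
Qed.
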